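(* Let $N=(V,A)$ be a phylogenetic network on $X$. Then the following are equivalent: (i) $N$ is tree-based. (ii) $N$ has an antichain $S\subseteq V$ and a partition of $V$ into $|S|$ chains, each of which forms a directed path in $N$ ending at a leaf in $X$. (iii) For every $U\subseteq V$, there exists a set of vertex-disjoint directed paths in $N$, each ending at a leaf in $X$, such that each element of $U$ lies on exactly one of these paths. (iv) The vertex set $V$ can be partitioned into a set of vertex-disjoint directed paths of $N$, each of which ends at a leaf in $X$. (v) The bipartite graph $\mathcal{G}_N$ has a matching of size $|V|-|X|$.
   Context: $X$ is a nonempty finite set. A phylogenetic network on $X$ is a rooted acyclic digraph with no parallel arcs such that: the unique root has out-degree at least one; $X$ is exactly the set of vertices of out-degree zero (leaves), each of in-degree one; every other vertex either has in-degree one and out-degree at least two (a tree vertex) or in-degree at least two and out-degree one (a reticulation). If $|X|=1$, the network may also consist of the single vertex in $X$. A phylogenetic $X$-tree is a phylogenetic network on $X$ with no reticulations. Subdividing an arc $(u,v)$ replaces it by arcs $(u,w),(w,v)$ with $w$ new; a subdivision is the result of a sequence of arc subdivisions. A phylogenetic network $N$ on $X$ is tree-based if it can be obtained from some phylogenetic $X$-tree $T$ (a base tree) by first taking a subdivision of $T$ (the new vertices are attachment points) and then adding new arcs $(u,v)$ (linking arcs) where either $u$ and $v$ are both attachment points, or $u$ is a non-leaf vertex of $T$ and $v$ is an attachment point; equivalently, $N$ has a rooted spanning tree with the same root as $N$ all of whose leaves lie in $X$. An antichain is a set of vertices no two of which are joined by a directed path. For a digraph $D=(V,A)$, $\mathcal{G}_D$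 is the bipartite graph with vertex bipartition $\{V_1,V_2\}$, where $V_1$ and $V_2$ are two disjoint copies of $V$, having an edge between the copy of $u$ in $V_1$ and the copy of $v$ in $V_2$ for each arc $(u,v)\in A$. *)

From mathcomp Require Import all_boot.
Set Implicit Arguments. Unset Strict Implicit. Unset Printing Implicit Defensive.

Section Phylo.
Variable V : finType.

(* A digraph on vertex set V is an arc relation a : rel V (hence no parallel arcs). *)
Definition indeg (a : rel V) (v : V) : nat := #|[set u | a u v]|.
Definition outdeg (a : rel V) (v : V) : nat := #|[set w | a v w]|.

Definition acyclic (a : rel V) : Prop := forall u v, a u v -> ~~ connect a v u.

Definition phylo_network (a : rel V) (X : {set V}) : Prop :=
  X != set0 /\ acyclic a /\
  (
    (X = [set: V] /\ #|X| = 1)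
  \/
    (exists r : V,
      indeg a r = 0 /\ (forall v, v != r -> 0 < indeg a v) /\
      0 < outdeg a r /\
      (forall v, (outdeg a v == 0) = (v \in X)) /\
      (forall x, x \in X -> indeg a x = 1) /\
      (forall v, v != r -> v \notin X ->
         (indeg a v = 1 /\ 2 <= outdeg a v) \/ (2 <= indeg a v /\ outdeg a v = 1)))).

(* Tree-based: N has a rooted spanning tree with the same root as N all of whose
   leaves lie in X.  The spanning tree is given by a sub-relation t of a. *)
Definition tree_based (a : rel V) (X : {set V}) : Prop :=
  exists (r : V) (t : rel V),
    indeg a r = 0 /\
    (forall u v, t u v -> a u v) /\
    indeg t r = 0 /\ (forall v, v != r -> indeg t v = 1) /\
    (forall v, connect t r v) /\
    (forall v, outdeg t v = 0 -> v \in X).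

Definition leaf_path (a : rel V) (X : {set V}) (p : seq V) : bool :=
  match p with
  | [::] => false
  | x :: q => path a x q && (last x q \in X)
  end.

Definition antichain (a : rel V) (S : {set V}) : Prop :=
  forall u v, u \in S -> v \in S -> u != v -> ~~ connect a u v.

Definition cond_ii (a : rel V) (X : {set V}) : Prop :=
  exists (S : {set V}) (ps : seq (seq V)),
    antichain a S /\ size ps = #|S| /\
    all (leaf_path a X) ps /\ uniq (flatten ps) /\ (forall v, v \in flatten ps).

Definition cond_iii (a : rel V) (X : {set V}) : Prop :=
  forall U : {set V}, exists ps : seq (seq V),
    all (leaf_path a X) ps /\ uniq (flatten ps) /\
    (forall u, u \in U -> count (fun p => u \in p) ps = 1).

Definition cond_iv (a : rel V) (X : {set V}) : Prop :=
  exists ps : seq (seq V),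
    all (leaf_path a X) ps /\ uniq (flatten ps) /\ (forall v, v \in flatten ps).

(* (v): a matching of G_N: a set of edges of G_N (i.e. arcs (u,v) of N, joining the
   copy of u in V1 to the copy of v in V2) no two sharing an endpoint. *)
Definition matching_GN (a : rel V) (M : {set V * V}) : Prop :=
  (forall e, e \in M -> a e.1 e.2) /\
  (forall e f, e \in M -> f \in M -> e != f -> e.1 != f.1 /\ e.2 != f.2).

Definition cond_v (a : rel V) (X : {set V}) : Prop :=
  exists M : {set V * V}, matching_GN a M /\ #|M| = #|V| - #|X|.

End Phylo.

(* A matching of G_N is a set of arcs of N with at most one chosen arc leaving and at most one
   entering each vertex.  As N is acyclic, the chosen arcs glue V into |V| - |M| vertex-disjoint
   directed paths, which end exactly at the vertices with no chosen outgoing arc; conversely the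
   consecutive pairs of a path partition form a matching.  Leaves have no outgoing arcs, so
   |M| <= |V| - |X|, with equality iff the paths all end at leaves; the path ends are then the
   leaves themselves, which form an antichain.  A spanning tree with leaves in X gives such a
   matching by choosing one child of every non-leaf, and a matching of size |V| - |X| gives a
   spanning tree by letting every non-root vertex choose its matched predecessor (or any
   in-neighbour): by acyclicity these parent pointers lead back to the root. *)

From mathcomp Require Import all_boot zify.
Set Implicit Arguments. Unset Strict Implicit. Unset Printing Implicit Defensive.

Section Relations.
Variables (V : finType) (t : rel V).

Lemma indeg0P v : reflect (forall u, ~~ t u v) (indeg t v == 0).
Proof.
rewrite cards_eq0; apply: (iffP eqP) => [E u | noarc].
  by apply/negP => tuv; have := in_set0 u; rewrite -E inE tuv.
by apply/setP => u; rewrite !inE (negbTE (noarc u)).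
Qed.

Lemma outdeg0P v : reflect (forall w, ~~ t v w) (outdeg t v == 0).
Proof.
rewrite cards_eq0; apply: (iffP eqP) => [E w | noarc].
  by apply/negP => tvw; have := in_set0 w; rewrite -E inE tvw.
by apply/setP => w; rewrite !inE (negbTE (noarc w)).
Qed.

Lemma indeg_le1_eq u u' v : indeg t v <= 1 -> t u v -> t u' v -> u = u'.
Proof. by move/card_le1_eqP => uniq_pred tuv tu'v; apply: uniq_pred; rewrite inE. Qed.

Lemma parent_connect (r : V) (parent : V -> V) :
  acyclic t -> (forall v, v != r -> t (parent v) v) ->
  forall v, connect [rel u w | (w != r) && (parent w == u)] r v.
Proof.
move=> ac t_parent v; have [n] := ubnP #|[set u | connect t u v]|.
elim: n v => // n IH v ancestors_lt.
have [-> | vr] := eqVneq v r; first exact: connect0.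
apply: (@connect_trans _ _ (parent v)); last by apply: connect1; rewrite /= vr eqxx.
apply: IH; rewrite -ltnS; apply: leq_trans ancestors_lt; apply: proper_card; apply/properP; split.
  apply/subsetP => u; rewrite !inE => /connect_trans; apply.
  exact/connect1/t_parent.
by exists v; rewrite inE ?connect0 //; apply/ac/t_parent.
Qed.

End Relations.

Lemma count_mem_flatten (T : eqType) (ss : seq (seq T)) x :
  uniq (flatten ss) -> count (fun s => x \in s) ss = (x \in flatten ss).
Proof.
elim: ss => //= s ss IH; rewrite cat_uniq mem_cat => /and3P [_ /hasPn disj uniq_ss].
rewrite IH //; case: (boolP (x \in s)) => //= xs.
by case: (boolP (x \in flatten ss)) => // /disj; rewrite xs.
Qed.

Lemma uniq_map_flatten (T : eqType) (ss : seq (seq T)) (f : seq T -> T) :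
  {in ss, forall s, f s \in s} -> uniq (flatten ss) -> uniq (map f ss).
Proof.
elim: ss => //= s ss IH f_in; rewrite cat_uniq => /and3P [_ /hasPn disj uniq_ss].
rewrite IH ?andbT //; last by move=> s' s's'; apply: f_in; rewrite inE s's' orbT.
apply/mapP => -[s' s's' fs'].
have /disj : f s' \in flatten ss.
  by apply/flattenP; exists s' => //; apply: f_in; rewrite inE s's' orbT.
by rewrite -fs' f_in ?mem_head.
Qed.

Section Matchings.
Variables (V : finType) (a : rel V).
Implicit Types (M : {set V * V}) (s : seq V).

Definition sources M := [set e.1 | e in M].
Definition targets M := [set e.2 | e in M].

Lemma matchingS M M' : M' \subset M -> matching_GN a M -> matching_GN a M'.
Proof.
move=> /subsetP sub [arcs disj]; split=> [e /sub/arcs // | e f /sub eM /sub fM].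
exact: disj.
Qed.

Lemma matching_fst_inj M : matching_GN a M -> {in M &, injective fst}.
Proof.
move=> [_ disj] e f eM fM ef; apply/eqP/negP => /negP /(disj e f eM fM) [].
by rewrite ef eqxx.
Qed.

Lemma matching_snd_inj M : matching_GN a M -> {in M &, injective snd}.
Proof.
move=> [_ disj] e f eM fM ef; apply/eqP/negP => /negP /(disj e f eM fM) [_].
by rewrite ef eqxx.
Qed.

Lemma card_sources M : matching_GN a M -> #|sources M| = #|M|.
Proof. by move/matching_fst_inj/card_in_imset. Qed.

Lemma sources_setD1 M e : matching_GN a M -> e \in M ->
  sources M = e.1 |: sources (M :\ e) /\ e.1 \notin sources (M :\ e).
Proof.
move=> HM eM; split; first by rewrite /sources -imsetU1 setD1K.
apply/imsetP => -[f]; rewrite !inE => /andP [fe fM] /(matching_fst_inj HM eM fM) ef.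
by rewrite ef eqxx in fe.
Qed.

Lemma targets_setD1 M e : matching_GN a M -> e \in M ->
  targets M = e.2 |: targets (M :\ e) /\ e.2 \notin targets (M :\ e).
Proof.
move=> HM eM; split; first by rewrite /targets -imsetU1 setD1K.
apply/imsetP => -[f]; rewrite !inE => /andP [fe fM] /(matching_snd_inj HM eM fM) ef.
by rewrite ef eqxx in fe.
Qed.

Definition supported_in M s := {in M, forall e, (e.1 \in s) && (e.2 \in s)}.

Lemma matchingU M1 M2 s1 s2 :
  matching_GN a M1 -> matching_GN a M2 -> supported_in M1 s1 -> supported_in M2 s2 ->
  [disjoint s1 & s2] -> matching_GN a (M1 :|: M2) /\ #|M1 :|: M2| = #|M1| + #|M2|.
Proof.
move=> [arcs1 disj1] [arcs2 disj2] supp1 supp2 /pred0P s12.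
have apart e f : e \in M1 -> f \in M2 -> e.1 != f.1 /\ e.2 != f.2.
  move=> /supp1 /andP [e1 e2] /supp2 /andP [f1 f2].
  split; apply/eqP => ef; [move: (s12 f.1) | move: (s12 f.2)];
  by rewrite /= ?f1 ?f2 -ef ?e1 ?e2.
split; first split.
- by move=> e; rewrite inE => /orP [/arcs1 | /arcs2].
- move=> e f; rewrite !inE => /orP [eM | eM] /orP [fM | fM] ef.
  + exact: disj1.
  + exact: apart.
  + by have [] := apart f e fM eM; rewrite ![f.1 == _]eq_sym ![f.2 == _]eq_sym.
  + exact: disj2.
rewrite cardsU; suff -> : M1 :&: M2 = set0 by rewrite cards0 subn0.
apply/setP => e; rewrite !inE; apply/andP => -[e1 e2].
by case: (apart e e e1 e2); rewrite eqxx.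
Qed.

End Matchings.

Lemma mem_behead_uniq (T : eqType) (x : T) s : uniq (x :: s) -> s =i [predD1 x :: s & x].
Proof. by move=> uniq_xs y; rewrite -mem_rem_uniq //= eqxx. Qed.

Section PathCovers.
Variables (V : finType) (a : rel V).
Implicit Types (M : {set V * V}) (p : seq V) (ps : seq (seq V)).

Definition dipath p := if p is x :: q then path a x q else false.

Definition path_cover ps :=
  [/\ all dipath ps, uniq (flatten ps) & forall v, v \in flatten ps].

Lemma path_matching x q : path a x q -> uniq (x :: q) ->
  exists M, [/\ matching_GN a M, #|M| = size q & {in M, forall e, (e.1 \in x :: q) && (e.2 \in q)}].
Proof.
elim: q x => [|y q IH] x /=.
  by move=> _ _; exists set0; split=> [|//|e]; rewrite ?cards0 //; first split=> e; rewrite inE.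
case/andP=> axy yq /andP [xyq uniq_yq]; have [M [[arcs disj] cardM suppM]] := IH y yq uniq_yq.
have apart f : f \in M -> x != f.1 /\ y != f.2.
  case/suppM/andP => f1 f2; split; apply/eqP => ef.
  - by move: xyq; rewrite ef f1.
  - by case/andP: uniq_yq; rewrite ef f2.
have xyM : (x, y) \notin M by apply: contraNN xyq => /apart [/eqP].
exists ((x, y) |: M); split.
- split=> [e | e f]; rewrite !inE; first by case/orP => [/eqP -> | /arcs].
  case/orP => [/eqP -> | eM] /orP [/eqP -> | fM]; rewrite ?eqxx // => ef.
  + exact: apart.
  + by have [] := apart e eM; rewrite ![_ == e.1]eq_sym ![_ == e.2]eq_sym.
  + exact: disj.
- by rewrite cardsU1 xyM cardM.
move=> e; rewrite !inE => /orP [/eqP -> | /suppM]; first by rewrite !eqxx.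
by rewrite inE => /andP [/orP [] -> ->]; rewrite !orbT.
Qed.

Lemma dipaths_matching ps : all dipath ps -> uniq (flatten ps) ->
  exists M, [/\ matching_GN a M, #|M| + size ps = size (flatten ps) & supported_in M (flatten ps)].
Proof.
elim: ps => [|p ps IH] /=.
  by exists set0; split=> [|//|e]; rewrite ?cards0 //; first split=> e; rewrite inE.
case: p => [//|x q] /andP [xq paths]; rewrite cat_uniq => /and3P [uniq_xq disj uniq_ps].
have [M1 [HM1 cardM1 supp1]] := path_matching xq uniq_xq.
have [M2 [HM2 cardM2 supp2]] := IH paths uniq_ps.
have supp1' : supported_in M1 (x :: q).
  by move=> e /supp1 /andP [-> e2]; rewrite inE e2 orbT.
have [HM cardM] : matching_GN a (M1 :|: M2) /\ #|M1 :|: M2| = #|M1| + #|M2|.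
  by apply: matchingU HM1 HM2 supp1' supp2 _; rewrite disjoint_sym disjoint_has.
exists (M1 :|: M2); split=> //.
  by rewrite cardM size_cat /= -cardM2 cardM1 addnS addSn addnA.
move=> e; rewrite inE mem_cat => /orP [/supp1' | /supp2] /andP [e1 e2].
  by rewrite !mem_cat e1 e2.
by rewrite !mem_cat e1 e2 !orbT.
Qed.

Lemma path_cover_matching ps :
  path_cover ps -> exists M, matching_GN a M /\ #|M| + size ps = #|V|.
Proof.
case=> paths uniq_ps cover; have [M [HM cardM _]] := dipaths_matching paths uniq_ps.
by exists M; split=> //; rewrite cardM -(card_uniqP uniq_ps); apply: eq_card => v; rewrite cover.
Qed.

Variable x0 : V.

Lemma dipath_connect p : dipath p -> connect a (head x0 p) (last x0 p).
Proof. by case: p => // x q xq; apply/connectP; exists q. Qed.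

Lemma head_dipath p : dipath p -> head x0 p \in p.
Proof. by case: p => // x q _; rewrite mem_head. Qed.

Lemma last_dipath p : dipath p -> last x0 p \in p.
Proof. by case: p => // x q _ /=; rewrite mem_last. Qed.

Lemma dipath_cat p1 p2 :
  dipath p1 -> dipath p2 -> a (last x0 p1) (head x0 p2) -> dipath (p1 ++ p2).
Proof.
by case: p1 => // x1 q1; case: p2 => // x2 q2 /= dp1 dp2 arc; rewrite cat_path dp1 /= arc.
Qed.

Lemma path_cover_merge ps p1 p2 : path_cover ps -> p1 \in ps -> p2 \in ps -> p1 != p2 ->
  a (last x0 p1) (head x0 p2) -> exists ps',
  [/\ path_cover ps', map (last x0) ps' =i [predD1 map (last x0) ps & last x0 p1]
    & map (head x0) ps' =i [predD1 map (head x0) ps & head x0 p2]].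
Proof.
move=> [paths uniq_ps cover] p1ps p2ps p12 arc12; set rest := rem p2 (rem p1 ps).
have perm_ps : perm_eq ps [:: p1, p2 & rest].
  apply: perm_trans (perm_to_rem p1ps) _; rewrite perm_cons perm_to_rem //.
  by move: p2ps; rewrite (perm_mem (perm_to_rem p1ps)) inE eq_sym (negbTE p12).
have rest_ps p : p \in rest -> p \in ps by move/mem_rem/mem_rem.
have perm_flat : perm_eq (flatten ps) (flatten ((p1 ++ p2) :: rest)).
  by apply: perm_trans (perm_flatten perm_ps) _; rewrite /= catA.
have uniq_ends f : {in ps, forall p, f p \in p} -> uniq [:: f p1, f p2 & map f rest].
  by move=> f_in; rewrite -(perm_uniq (perm_map f perm_ps)) uniq_map_flatten.
have ends_ps f : map f ps =i [:: f p1, f p2 & map f rest] := perm_mem (perm_map f perm_ps).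
have /andP [dp1 dp2] : dipath p1 && dipath p2 by rewrite (allP paths) ?(allP paths).
have last_cat12 : last x0 (p1 ++ p2) = last x0 p2 by rewrite last_cat; case: (p2) dp2.
have head_cat12 : head x0 (p1 ++ p2) = head x0 p1 by case: (p1) dp1.
exists ((p1 ++ p2) :: rest); split.
- split.
  + by rewrite /= dipath_cat //=; apply/allP => p /rest_ps; apply: (allP paths).
  + by rewrite -(perm_uniq perm_flat).
  + by move=> v; rewrite -(perm_mem perm_flat).
- move=> v; rewrite /= last_cat12 (@mem_behead_uniq _ (last x0 p1)); last first.
    by apply: uniq_ends => p /(allP paths) /last_dipath.
  by rewrite !inE ends_ps !inE.
- move=> v; rewrite /= head_cat12 (@mem_behead_uniq _ (head x0 p2)); last first.
    rewrite (perm_uniq (permEl (perm_catCA [:: _] [:: _] _))).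
    by apply: uniq_ends => p /(allP paths) /head_dipath.
  by rewrite !inE ends_ps !inE orbCA.
Qed.

Lemma matching_path_cover M : acyclic a -> matching_GN a M -> exists ps,
  [/\ path_cover ps, map (last x0) ps =i ~: sources M & map (head x0) ps =i ~: targets M].
Proof.
move=> ac; have [n] := ubnP #|M|; elim: n M => // n IH M cardM HM.
have [-> | [e eM]] := set_0Vmem M.
  have ends f : (forall v, f [:: v] = v) -> map f [seq [:: v] | v <- enum V] = enum V.
    by move=> fE; elim: (enum V) => //= v s ->; rewrite fE.
  exists [seq [:: v] | v <- enum V]; rewrite /sources /targets !imset0 setC0.
  split=> [| v | v]; rewrite ?ends // ?mem_enum ?inE //.
  split=> [| | v]; rewrite ?flatten_seq1 ?enum_uniq ?mem_enum //.
  by apply/allP => _ /mapP [v _ ->].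
have HM' : matching_GN a (M :\ e) by apply: matchingS HM; apply: subsetDl.
have [|ps [cover_ps lasts heads]] := IH (M :\ e) _ HM'.
  by rewrite -ltnS; apply: leq_trans cardM; rewrite ltnS (cardsD1 e M) eM.
have [sourcesM e1_new] := sources_setD1 HM eM.
have [targetsM e2_new] := targets_setD1 HM eM.
have /mapP [p1 p1ps e1_last] : e.1 \in map (last x0) ps by rewrite lasts inE.
have /mapP [p2 p2ps e2_head] : e.2 \in map (head x0) ps by rewrite heads inE.
have arc_e : a e.1 e.2 by case: HM => arcs _; apply: arcs.
have p12 : p1 != p2.
  apply/eqP => p12; case/negP: (ac _ _ arc_e); rewrite e1_last e2_head p12.
  by apply: dipath_connect; case: cover_ps => /allP paths _ _; apply: paths.
have [|ps' [cover_ps' lasts' heads']] := path_cover_merge cover_ps p1ps p2ps p12.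
  by rewrite -e1_last -e2_head.
exists ps'; split=> // v.
  by rewrite lasts' sourcesM !inE lasts -e1_last inE negb_or.
by rewrite heads' targetsM !inE heads -e2_head inE negb_or.
Qed.

End PathCovers.

Section Network.
Variables (V : finType) (a : rel V) (X : {set V}).
Hypothesis network : phylo_network a X.
Implicit Types (M : {set V * V}) (ps : seq (seq V)).

Lemma network_acyclic : acyclic a.
Proof. by case: network => _ []. Qed.

Lemma network_leaf : exists x, x \in X.
Proof. by case: network => /set0Pn. Qed.

Lemma leaf_no_arc x y : x \in X -> ~~ a x y.
Proof.
case: network => _ [ac [[allX oneX] | [r [_ [_ [_ [leaves _]]]]]]] xX.
  apply/negP => axy; have := ac _ _ axy; suff -> : y = x by rewrite connect0.
  have /card_le1_eqP all_eq : #|[set: V]| <= 1 by rewrite -allX oneX.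
  by apply: all_eq; rewrite inE.
by apply/outdeg0P; rewrite leaves.
Qed.

Lemma leaf_connect x y : x \in X -> connect a x y -> x = y.
Proof.
by move=> xX /connectP [[|z p] //= /andP [axz _] _]; case/negP: (leaf_no_arc z xX).
Qed.

Lemma network_root : exists r, indeg a r = 0 /\ forall v, v != r -> 0 < indeg a v.
Proof.
case: network => _ [ac [[allX oneX] | [r [r0 [rooted _]]]]]; last by exists r.
have /cards1P [r Xr] : #|X| == 1 by rewrite oneX.
have all_r v : v = r by apply/set1P; rewrite -Xr allX inE.
exists r; split=> [|v]; last by rewrite (all_r v) eqxx.
by apply/eqP/indeg0P => u; apply/negP => aur; case/negP: (ac _ _ aur); rewrite (all_r u).
Qed.

Lemma sources_leaves M : matching_GN a M -> sources M \subset ~: X.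
Proof.
case=> arcs _; apply/subsetP => _ /imsetP [e eM ->]; rewrite inE.
by apply: contraL (arcs e eM) => /leaf_no_arc.
Qed.

Lemma card_matching_le M : matching_GN a M -> #|M| <= #|V| - #|X|.
Proof.
move=> HM; rewrite -(card_sources HM) -(cardsC X) addKn.
exact/subset_leq_card/sources_leaves.
Qed.

Lemma max_matching_sources M :
  matching_GN a M -> #|M| = #|V| - #|X| -> sources M = ~: X.
Proof.
move=> HM cardM; apply/eqP; rewrite eqEcard sources_leaves //=.
by rewrite (card_sources HM) cardM -(cardsC X) addKn.
Qed.

Lemma leaf_pathE x0 p : leaf_path a X p = dipath a p && (last x0 p \in X).
Proof. by case: p. Qed.

Lemma leaf_path_cover ps :
  all (leaf_path a X) ps -> uniq (flatten ps) -> (forall v, v \in flatten ps) -> path_cover a ps.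
Proof.
have [x0 _] := network_leaf.
by move=> leaves; split=> //; apply: sub_all leaves => p; rewrite (leaf_pathE x0) => /andP [].
Qed.

Lemma size_leaf_path_cover ps : all (leaf_path a X) ps -> path_cover a ps -> size ps = #|X|.
Proof.
move=> leaves cover_ps; have [x0 _] := network_leaf.
have [M [HM cardM]] := path_cover_matching cover_ps.
have := card_matching_le HM; have := subset_leq_card (subsetT X); rewrite cardsT.
suff : size ps <= #|X| by lia.
have [paths uniq_ps _] := cover_ps.
have uniq_lasts : uniq (map (last x0) ps).
  by apply: uniq_map_flatten uniq_ps => p /(allP paths) /last_dipath.
rewrite -(size_map (last x0)) -(card_uniqP uniq_lasts); apply: subset_leq_card; apply/subsetP.
by move=> v /mapP [p /(allP leaves)]; rewrite (leaf_pathE x0) => /andP [_ ?] ->.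
Qed.

Lemma tree_based_cond_v : tree_based a X -> cond_v a X.
Proof.
case=> r [t [_ [sub_ta [indeg_r [indeg1 [_ t_leaves]]]]]].
have indeg_le1 v : indeg t v <= 1 by have [->|/indeg1 ->] := eqVneq v r; rewrite ?indeg_r.
pose child v := odflt v [pick w | t v w].
have t_child v : v \notin X -> t v (child v).
  move=> vX; rewrite /child; case: pickP => [//|no_child].
  by case/negP: vX; apply/t_leaves/eqP/outdeg0P => w; rewrite no_child.
exists [set (v, child v) | v in ~: X]; split; last first.
  by rewrite card_in_imset ?(cardsCs (~: X)) ?setCK // => v w _ _ [].
split=> [_ /imsetP [v vX ->] | _ _ /imsetP [v vX ->] /imsetP [w wX ->] vw].
  by apply/sub_ta/t_child; rewrite inE in vX.
have {}vw : v != w by apply: contraNneq vw => ->.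
split=> //=; apply: contraNneq vw => child_vw; rewrite !inE in vX wX.
apply/eqP; apply: (indeg_le1_eq (indeg_le1 (child w))); last by apply: t_child.
by rewrite -child_vw; apply: t_child.
Qed.

Lemma cond_v_tree_based : cond_v a X -> tree_based a X.
Proof.
case=> M [[arcs disj] cardM]; have [r [r0 rooted]] := network_root.
pose parent v := if [pick u | (u, v) \in M] is Some u then u else odflt v [pick u | a u v].
have a_parent v : v != r -> a (parent v) v.
  move=> vr; rewrite /parent; case: pickP => [u /arcs // | _].
  case: pickP => [// | no_parent].
  by have := rooted v vr; rewrite lt0n => /indeg0P [] u; rewrite no_parent.
have parent_matched u v : (u, v) \in M -> parent v = u.
  move=> uvM; rewrite /parent; case: pickP => [u' u'vM | /(_ u)]; last by rewrite uvM.
  by apply/eqP/negP => /negP u'u; case: (disj _ _ u'vM uvM); rewrite ?xpair_eqE ?eqxx ?andbT.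
pose t := [rel u v | (v != r) && (parent v == u)].
exists r, t; split=> //; split; first by move=> u v /andP [/a_parent + /eqP <-].
split; first by apply/eqP/indeg0P => u; rewrite /= eqxx.
split.
  move=> v vr; apply/eqP/cards1P; exists (parent v).
  by apply/setP => u; rewrite !inE /= vr eq_sym.
split; first exact: parent_connect network_acyclic a_parent.
move=> v /eqP/outdeg0P no_child; apply/negPn/negP => vX.
have : v \in sources M by rewrite (max_matching_sources (conj arcs disj) cardM) inE.
case/imsetP => -[u w] uwM /= vu; subst u.
case/negP: (no_child w); rewrite /= (parent_matched _ _ uwM) eqxx andbT.
by apply: contraTneq (arcs _ uwM) => ->; move/eqP/indeg0P: r0.
Qed.

Lemma cond_v_iv : cond_v a X -> cond_iv a X.
Proof.
case=> M [HM cardM]; have [x0 _] := network_leaf.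
have [ps [[paths uniq_ps cover] lasts _]] := matching_path_cover x0 network_acyclic HM.
exists ps; split=> //; apply/allP => p pps; rewrite (leaf_pathE x0) (allP paths) //=.
by rewrite -[X]setCK -(max_matching_sources HM cardM) -lasts map_f.
Qed.

Lemma cond_iv_v : cond_iv a X -> cond_v a X.
Proof.
case=> ps [leaves [uniq_ps cover]]; have cover_ps := leaf_path_cover leaves uniq_ps cover.
have [M [HM cardM]] := path_cover_matching cover_ps.
by exists M; rewrite -cardM (size_leaf_path_cover leaves cover_ps) addnK.
Qed.

Lemma cond_iv_ii : cond_iv a X -> cond_ii a X.
Proof.
case=> ps [leaves [uniq_ps cover]]; have cover_ps := leaf_path_cover leaves uniq_ps cover.
exists X, ps; split; last by rewrite (size_leaf_path_cover leaves cover_ps).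
by move=> u v uX _; apply: contra_neqN => /(leaf_connect uX).
Qed.

Lemma cond_ii_iii : cond_ii a X -> cond_iii a X.
Proof.
case=> _ [ps [_ [_ [leaves [uniq_ps cover]]]]] U; exists ps; do 2!split=> //; move=> u _.
by rewrite count_mem_flatten ?cover.
Qed.

Lemma cond_iii_iv : cond_iii a X -> cond_iv a X.
Proof.
case/(_ [set: V]) => ps [leaves [uniq_ps once]]; exists ps; do 2!split=> //; move=> v.
by have := once v (in_setT v); rewrite count_mem_flatten //; case: (v \in _).
Qed.

End Network.

Theorem theorem3 (V : finType) (a : rel V) (X : {set V}) :
  phylo_network a X ->
  [<-> tree_based a X; cond_ii a X; cond_iii a X; cond_iv a X; cond_v a X].
Proof.
move=> network; tfae.
- by move/tree_based_cond_v/(cond_v_iv network)/(cond_iv_ii network).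
- exact: cond_ii_iii.
- exact: cond_iii_iv.
- exact: cond_iv_v.
- exact: cond_v_tree_based.
Qed.
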